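(* Let $k$ be a field of characteristic $\ne 2$ and let $n$ be a positive even integer. Then there is an isomorphism of symmetric bilinear forms over $k$: \[ \phi^{\mathrm{even}}_n \cong \begin{cases} \phi^{\mathrm{odd}}_n & \text{if } n \equiv 0 \bmod 4,\\[2pt] \left\langle 2\binom{n}{n/2}\right\rangle \oplus \phi^{\mathrm{odd}}_n & \text{if } n \equiv 2 \bmod 4. \end{cases} \]
   Context: For $\lambda \in k$, $\langle \lambda \rangle$ denotes a one-dimensional $k$-vector space with basis $e$ and symmetric bilinear form $(e,e)\mapsto\lambda$ (possibly degenerate if $\lambda = 0$ in $k$); $\oplus$ is orthogonal sum. Define $\phi^{\mathrm{odd}}_n := \bigoplus_{0 \le i < n/2,\ i \text{ odd}} \langle \binom{n}{i}\rangle$ and $\phi^{\mathrm{even}}_n := \bigoplus_{0 \le i < n/2,\ i \text{ even}} \langle \binom{n}{i}\rangle$, with binomial coefficients viewed as elements of $k$. *)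

From mathcomp Require Import all_boot all_algebra.
Set Implicit Arguments. Unset Strict Implicit. Unset Printing Implicit Defensive.
Import GRing.Theory.
Local Open Scope ring_scope.

(* Diagonal symmetric bilinear form <a_0> ⊕ ... ⊕ <a_{m-1}> on k^m, given by
   its Gram matrix: B(x,y) = x *m A *m y^T for row vectors x y.
   Orthogonal sum of diagonal forms = concatenation of the lists. *)
Definition diag_form (k : fieldType) (s : seq k) : 'M[k]_(size s) :=
  diag_mx (\row_(i < size s) s`_i).

(* Isometry of (Gram matrices of) bilinear forms: a linear bijection
   f : k^m -> k^n, f x = x *m P, with B(f x, f y) = A(x, y). *)
Definition form_iso (k : fieldType) (m n : nat) (A : 'M[k]_m) (B : 'M[k]_n) : Prop :=
  exists (P : 'M[k]_(m, n)) (Q : 'M[k]_(n, m)),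
    [/\ P *m Q = 1%:M, Q *m P = 1%:M & P *m B *m P^T = A].

(* phi^odd_n = ⊕_{0 <= i < n/2, i odd} <C(n,i)> ; i < n/2 iff 2 i < n *)
Definition phi_odd (k : fieldType) (n : nat) : seq k :=
  [seq ('C(n, i))%:R | i <- iota 0 n & odd i && (i.*2 < n)%N].

Definition phi_even (k : fieldType) (n : nat) : seq k :=
  [seq ('C(n, i))%:R | i <- iota 0 n & ~~ odd i && (i.*2 < n)%N].

(* Write n = 2m and let K be the Krawtchouk matrix K i j = [x^j] (1 + x)^(n-i) (1 - x)^i,
   0 <= i, j <= n.  Homogenizing, sum_j K i j A^(n-j) B^j = (A + B)^(n-i) (A - B)^i,
   which yields K^2 = 2^n, K diag((-1)^j) K = 2^n (i |-> n - i), and, from the symmetry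
   of the generating function (1 + x + y - xy)^n, binom(n,i) K i j = binom(n,j) K j i.
   Subtracting the first two identities, for even i, l < m the odd columns j satisfy
   2 sum_(j odd) K l j K j i = 2^n [i = l]; as the summand is invariant under j |-> n - j
   the sum folds onto the odd j <= m, the middle index m (odd iff n = 2 mod 4) being
   counted once.  Hence the even rows of K / 2^m, with the columns folded in this way,
   define an isometry from phi_even onto phi_odd, plus <2 binom(n,m)> when m is odd. *)
From mathcomp Require Import all_boot all_algebra polyXY.
From mathcomp Require Import ring zify.
Import GRing.Theory.
Set Implicit Arguments. Unset Strict Implicit.
Local Open Scope ring_scope.

Section Homogenization.

Variables (R : comNzRingType) (S : comAlgType R).

Definition homog (d : nat) (p : {poly R}) (A B : S) : S :=
  \sum_(j < d.+1) p`_j *: (A ^+ (d - j) * B ^+ j).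

Lemma homogS (d : nat) (c e : R) (p : {poly R}) (A B : S) :
  (size p <= d.+1)%N ->
  homog d.+1 (c *: p + e *: ('X * p)) A B = (c *: A + e *: B) * homog d p A B.
Proof.
move=> sp; rewrite /homog.
under eq_bigr => j _ do rewrite coefD !coefZ scalerDl.
rewrite big_split /= big_ord_recr [X in _ + X]big_ord_recl /=.
rewrite !coefXM /= (nth_default 0 sp) !mulr0 !scale0r addr0 add0r.
rewrite mulrDl !mulr_sumr; congr (_ + _); apply: eq_bigr => j _.
  by rewrite (subSn (leq_ord j)) exprS -scalerAl -scalerAr scalerA mulrA.
by rewrite coefXM /= subSS exprS -scalerAl -scalerAr scalerA mulrCA add0n.
Qed.

Lemma size_binomial_poly (a b : nat) :
  (size ((1 + 'X) ^+ a * (1 - 'X) ^+ b : {poly R})%R <= (a + b).+1)%N.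
Proof.
have size_lin (q : {poly R}) c : size q = 2%N -> (size (q ^+ c) <= c.+1)%N.
  by move=> sq; apply: leq_trans (size_poly_exp_leq _ _) _; rewrite sq mul1n.
have sD : size (1 + 'X : {poly R}) = 2%N by rewrite addrC -polyC1 size_XaddC.
have sB : size (1 - 'X : {poly R}) = 2%N.
  by rewrite -opprB size_polyN -polyC1 size_XsubC.
apply: leq_trans (size_polyMleq _ _) _; rewrite -subn1 leq_subLR.
by apply: leq_trans (leq_add (size_lin _ a sD) (size_lin _ b sB)) _; lia.
Qed.

Lemma homog_pow (a b : nat) (A B : S) :
  homog (a + b) ((1 + 'X) ^+ a * (1 - 'X) ^+ b) A B = (A + B) ^+ a * (A - B) ^+ b.
Proof.
elim: a => [|a IHa].
  rewrite add0n expr0 !mul1r; elim: b => [|b IHb].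
    by rewrite /homog big_ord1 subnn !expr0 coefC eqxx mulr1 scale1r.
  have -> : (1 - 'X : {poly R}) ^+ b.+1 = 1 *: (1 - 'X) ^+ b + (-1) *: ('X * (1 - 'X) ^+ b).
    by rewrite exprS scaleN1r scale1r; ring.
  rewrite homogS; last by have := size_binomial_poly 0 b; rewrite expr0 mul1r.
  by rewrite IHb exprS scale1r scaleN1r.
have -> : (1 + 'X : {poly R}) ^+ a.+1 * (1 - 'X) ^+ b =
   1 *: ((1 + 'X) ^+ a * (1 - 'X) ^+ b) + 1 *: ('X * ((1 + 'X) ^+ a * (1 - 'X) ^+ b)).
  by rewrite !scale1r exprS; ring.
by rewrite addSn homogS ?size_binomial_poly // IHa !scale1r exprS mulrA.
Qed.

End Homogenization.

Section Krawtchouk.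

Variables (R : comNzRingType) (n : nat).

Definition krawtchouk_poly (i : nat) : {poly R} := (1 + 'X) ^+ (n - i) * (1 - 'X) ^+ i.

Definition krawtchouk (i j : nat) : R := (krawtchouk_poly i)`_j.

Lemma homog_krawtchouk (i : nat) (A B : {poly R}) : (i <= n)%N ->
  \sum_(j < n.+1) krawtchouk i j *: (A ^+ (n - j) * B ^+ j) =
  (A + B) ^+ (n - i) * (A - B) ^+ i.
Proof. by move=> le_in; rewrite -homog_pow subnK. Qed.

Lemma krawtchouk_rev (i t : nat) : (i <= n)%N -> (t <= n)%N ->
  krawtchouk i (n - t) = (-1) ^+ i * krawtchouk i t.
Proof.
move=> le_in le_tn.
have := homog_krawtchouk 'X 1 le_in.
rewrite (reindex_inj rev_ord_inj) /=.
under eq_bigr => j _ do rewrite expr1n mulr1 subSS (subKn (leq_ord j)).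
rewrite -(poly_def _ (fun j => krawtchouk i (n - j))) => /(congr1 (coefp t)) /=.
rewrite coef_poly ltnS le_tn => ->.
by rewrite -[('X - 1)]opprB -scaleN1r exprZn -scalerAr coefZ addrC.
Qed.

Lemma krawtchouk_compl (i t : nat) : (i <= n)%N -> (t <= n)%N ->
  krawtchouk (n - i) t = (-1) ^+ t * krawtchouk i t.
Proof.
move=> le_in le_tn.
have := homog_krawtchouk 1 (- 'X) le_in.
under eq_bigr => j _ do rewrite expr1n mul1r -scaleN1r exprZn scalerA.
rewrite -(poly_def _ (fun j => krawtchouk i j * (-1) ^+ j)) => /(congr1 (coefp t)) /=.
rewrite coef_poly ltnS le_tn opprK => Et.
by rewrite mulrC Et /krawtchouk /krawtchouk_poly subKn // mulrC.
Qed.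

Lemma two_powX (a b : nat) :
  (2 : {poly R}) ^+ a * (2 * 'X) ^+ b = (2 ^+ (a + b) : R) *: 'X^b.
Proof. by rewrite exprMn mulrA -exprD -mul_polyC rmorphXn rmorph_nat. Qed.

Lemma krawtchouk_sqr (i l : nat) : (i <= n)%N ->
  \sum_(j < n.+1) krawtchouk i j * krawtchouk j l = 2 ^+ n * (l == i)%:R.
Proof.
move=> le_in; have := homog_krawtchouk (1 + 'X) (1 - 'X) le_in.
have -> : (1 + 'X) + (1 - 'X) = 2 :> {poly R} by ring.
have -> : (1 + 'X) - (1 - 'X) = 2 * 'X :> {poly R} by ring.
rewrite two_powX subnK // => /(congr1 (coefp l)) /=.
by rewrite coef_sum coefZ coefXn => <-; apply: eq_bigr => j _; rewrite coefZ.
Qed.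

Lemma krawtchouk_sqr_sign (i l : nat) : (i <= n)%N ->
  \sum_(j < n.+1) (-1) ^+ j * krawtchouk i j * krawtchouk j l =
    2 ^+ n * (l == n - i)%N%:R.
Proof.
move=> le_in; have := homog_krawtchouk (1 + 'X) (- (1 - 'X)) le_in.
have -> : (1 + 'X) + - (1 - 'X) = 2 * 'X :> {poly R} by ring.
have -> : (1 + 'X) - - (1 - 'X) = 2 :> {poly R} by ring.
rewrite mulrC two_powX addnC subnK // => /(congr1 (coefp l)) /=.
rewrite coef_sum coefZ coefXn => <-; apply: eq_bigr => j _.
by rewrite -scaleN1r exprZn -scalerAr scalerA coefZ [_ * (-1) ^+ _]mulrC.
Qed.

Lemma krawtchouk_sym (i j : nat) : (i <= n)%N -> (j <= n)%N ->
  'C(n, i)%:R * krawtchouk i j = 'C(n, j)%:R * krawtchouk j i.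
Proof.
pose W : {poly {poly R}} := ((1 + 'X)%:P + (1 - 'X)%:P * 'X) ^+ n.
have coefW a b : (a <= n)%N -> W`_a`_b = 'C(n, a)%:R * krawtchouk a b.
  move=> le_an; rewrite /W exprDn.
  under eq_bigr => c _ do rewrite exprMn mulrA -!rmorphXn -rmorphM mul_polyC scalerMnl.
  rewrite -(poly_def _ (fun c => krawtchouk_poly c *+ 'C(n, c))).
  by rewrite coef_poly ltnS le_an coefMn mulr_natl.
have swapW : swapXY W = W.
  rewrite /W rmorphXn rmorphD rmorphM /= (swapXY_polyC (1 + 'X)).
  rewrite (swapXY_polyC (1 - 'X)) swapXY_X !rmorphD !rmorphN !rmorph1 /= !map_polyX.
  by congr (_ ^+ _); ring.
by move=> le_in le_jn; rewrite -coefW // -coefW // -coef_swapXY swapW.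
Qed.

Lemma krawtchouk_sqr_odd (i l : nat) : (i <= n)%N ->
  2 * \sum_(j < n.+1) (odd j)%:R * (krawtchouk i j * krawtchouk j l) =
    2 ^+ n * ((l == i)%:R - (l == n - i)%N%:R).
Proof.
move=> le_in; rewrite mulrBr -krawtchouk_sqr // -krawtchouk_sqr_sign //.
rewrite -sumrB mulr_sumr; apply: eq_bigr => j _.
by rewrite -signr_odd; case: (odd j); rewrite /= ?expr0 ?expr1; ring.
Qed.

End Krawtchouk.

Lemma sum_ord_mirror (V : nmodType) (m : nat) (F : nat -> V) :
  (forall j, (j <= m.*2)%N -> F (m.*2 - j)%N = F j) ->
  \sum_(j < m.*2.+1) F j = (\sum_(j < m) F j) *+ 2 + F m.
Proof.
move=> F_mirror.
rewrite -!(big_mkord xpredT) (@big_cat_nat _ _ _ m.+1) //=; last by lia.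
rewrite big_nat_recr //= -{1}[m.+1]add0n big_addn.
have -> : (m.*2.+1 - m.+1 = m)%N by lia.
have -> : \sum_(0 <= i < m) F (i + m.+1)%N = \sum_(0 <= i < m) F i.
  rewrite big_nat_rev; apply: eq_big_nat => j /andP[_ lt_jm].
  by rewrite -[RHS]F_mirror; [congr F; lia | lia].
by rewrite mulr2n addrAC.
Qed.

Lemma filter_iota_double (P : pred nat) (m : nat) :
  [seq i <- iota 0 m.*2 | P i && (i.*2 < m.*2)%N] = [seq i <- iota 0 m | P i].
Proof.
rewrite (@eq_filter _ _ (predI P (fun i => i < 0 + m)%N)); last first.
  by move=> i /=; rewrite ltn_double.
by rewrite filter_predI filter_iota_ltn // -addnn leq_addr.
Qed.

Lemma count_odd_iota (m : nat) : count odd (iota 0 m) = m./2.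
Proof.
elim: m => // m IHm.
by rewrite -addn1 iotaD count_cat IHm /= addn0 add0n addn1 /= uphalf_half addnC.
Qed.

Lemma count_even_iota (m : nat) : count (fun i => ~~ odd i) (iota 0 m) = uphalf m.
Proof.
have := count_predC odd (iota 0 m); rewrite size_iota count_odd_iota => E.
by rewrite -[LHS]/(count (predC odd) (iota 0 m)) uphalf_half; lia.
Qed.

Lemma double_mod4 (m : nat) : (m.*2 %% 4 == 0)%N = ~~ odd m.
Proof. by rewrite -muln2 -[4%N]/(2 * 2)%N -muln_modl modn2; case: (odd m). Qed.

Lemma mulmx1C_cast (k : fieldType) (m n : nat) (P : 'M[k]_(m, n)) (Q : 'M[k]_(n, m)) :
  m = n -> P *m Q = 1%:M -> Q *m P = 1%:M.
Proof. by move=> eq_mn; move: P Q; rewrite eq_mn; exact: mulmx1C. Qed.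

Lemma diag_form_iso (k : fieldType) (I J : seq nat) (f g : nat -> k)
    (p q : nat -> nat -> k) :
  uniq I -> size I = size J ->
  (forall i i', i \in I -> i' \in I -> \sum_(j <- J) p i j * q j i' = (i == i')%:R) ->
  (forall i j, i \in I -> j \in J -> g j * p i j = q j i * f i) ->
  form_iso (diag_form (map f I)) (diag_form (map g J)).
Proof.
move=> uI eq_size PQ gp_qf.
pose P := \matrix_(x < size (map f I), y < size (map g J)) p (nth 0 I x) (nth 0 J y).
pose Q := \matrix_(y < size (map g J), x < size (map f I)) q (nth 0 J y) (nth 0 I x).
have ePQ : P *m Q = 1%:M.
  apply/matrixP => x x'; rewrite !mxE.
  under eq_bigr do rewrite !mxE.
  have [lt_xI lt_x'I] : (x < size I)%N /\ (x' < size I)%N by rewrite -!(size_map f).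
  rewrite -val_eqE /= -(nth_uniq 0 lt_xI lt_x'I uI) -PQ ?mem_nth //.
  by rewrite (big_nth 0) big_mkord size_map.
have eQP : Q *m P = 1%:M by apply: mulmx1C_cast ePQ; rewrite !size_map.
exists P, Q; split => //.
have eB : diag_form (map g J) *m P^T = Q *m diag_form (map f I).
  apply/matrixP => y x; rewrite /diag_form mul_diag_mx mul_mx_diag !mxE.
  have [lt_xI lt_yJ] : (x < size I)%N /\ (y < size J)%N.
    by rewrite -(size_map f) -(size_map g).
  by rewrite !(nth_map 0) // gp_qf ?mem_nth.
by rewrite -mulmxA eB mulmxA ePQ mul1mx.
Qed.

Section EvenOddForms.

Variables (k : fieldType) (m : nat).
Hypothesis two_neq0 : (2 : k) != 0.

Local Notation n := m.*2.
Local Notation K := (@krawtchouk k n).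

Definition even_below := [seq i <- iota 0 m | ~~ odd i].
Definition odd_below := [seq i <- iota 0 m | odd i].
Definition odd_upto := nseq (odd m) m ++ odd_below.

(* The number of indices in the pair {j, n - j}. *)
Definition mirror_mult (j : nat) : k := if j == m then 1 else 2.

Lemma mem_odd_below (j : nat) : j \in odd_below -> (j < m)%N.
Proof. by rewrite mem_filter mem_iota => /andP[_ /andP[_]]. Qed.

Lemma mem_even_below (i : nat) : i \in even_below -> ~~ odd i && (i < m)%N.
Proof. by rewrite mem_filter mem_iota. Qed.

Lemma mem_odd_upto (j : nat) : j \in odd_upto -> (j <= m)%N.
Proof.
rewrite mem_cat => /orP[|/mem_odd_below/ltnW //].
by case: (odd m) => //; rewrite inE => /eqP ->.
Qed.

Lemma sum_odd_mirror (F : nat -> k) :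
  (forall j, (j <= n)%N -> F (n - j)%N = F j) ->
  \sum_(j < n.+1) (odd j)%:R * F j = \sum_(j <- odd_upto) mirror_mult j * F j.
Proof.
move=> F_mirror; rewrite (sum_ord_mirror (F := fun j => (odd j)%:R * F j)); last first.
  by move=> j le_jn; rewrite F_mirror // oddB // odd_double.
rewrite big_cat /= addrC; congr (_ + _).
  transitivity ((\sum_(j <- odd_below) F j) *+ 2).
    have -> : odd_below = [seq i <- index_iota 0 m | odd i] by rewrite /index_iota subn0.
    congr (_ *+ _); rewrite big_filter [RHS]big_mkcond big_mkord; apply: eq_bigr => j _.
    by case: (odd j); rewrite ?mul1r ?mul0r.
  rewrite -sumrMnl; apply: eq_big_seq => j /mem_odd_below lt_jm.
  by rewrite /mirror_mult (ltn_eqF lt_jm) mulr_natl.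
by case: (odd m); rewrite /= ?big_seq1 ?big_nil /mirror_mult ?eqxx ?mul1r ?mul0r.
Qed.

Lemma krawtchouk_even_orthogonal (i l : nat) : i \in even_below -> l \in even_below ->
  2 * \sum_(j <- odd_upto) mirror_mult j * (K l j * K j i) = 2 ^+ n * (i == l)%:R.
Proof.
move=> /mem_even_below/andP[even_i lt_im] /mem_even_below/andP[even_l lt_lm].
have [le_in le_ln] : (i <= n)%N /\ (l <= n)%N by rewrite -!addnn; split; lia.
rewrite -(sum_odd_mirror (F := fun j => K l j * K j i)); last first.
  move=> j le_jn; rewrite (krawtchouk_rev k le_ln le_jn) (krawtchouk_compl k le_jn le_in).
  have sign_even x : ~~ odd x -> (-1 : k) ^+ x = 1.
    by move=> even_x; rewrite -signr_odd (negbTE even_x).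
  by rewrite !sign_even // !mul1r.
rewrite (krawtchouk_sqr_odd k i le_ln).
have -> : (i == n - l)%N = false by apply/negbTE; lia.
by rewrite subr0.
Qed.

Lemma even_below_odd_upto_iso :
  form_iso (diag_form [seq 'C(n, i)%:R : k | i <- even_below])
           (diag_form [seq ((if j == m then 2 else 1) * 'C(n, j))%:R | j <- odd_upto]).
Proof.
have two_pow_neq0 : (2 ^+ m : k) != 0 by rewrite expf_neq0.
apply: (@diag_form_iso _ _ _ _ _ (fun i j => mirror_mult j * K j i / 2 ^+ m)
                                 (fun j i => 2 * K i j / 2 ^+ m)).
- by rewrite filter_uniq ?iota_uniq.
- by rewrite size_cat size_nseq !size_filter count_even_iota count_odd_iota uphalf_half.
- move=> i l Ii Il.
  transitivity
    (2 * (\sum_(j <- odd_upto) mirror_mult j * (K l j * K j i)) / (2 ^+ m * 2 ^+ m)).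
    rewrite [in RHS]mulr_sumr [in RHS]mulr_suml; apply: eq_bigr => j _.
    by field.
  rewrite krawtchouk_even_orthogonal // -exprD addnn mulrAC mulfV ?mul1r //.
  by rewrite expf_neq0.
- move=> i j /mem_even_below/andP[_ lt_im] /mem_odd_upto le_jm.
  have [le_in le_jn] : (i <= n)%N /\ (j <= n)%N by rewrite -!addnn; split; lia.
  transitivity (2 * ('C(n, j)%:R * K j i) / 2 ^+ m).
    by rewrite natrM /mirror_mult; case: (j == m); ring.
  by rewrite -(krawtchouk_sym k le_in le_jn); ring.
Qed.

Lemma odd_upto_weights :
  [seq ((if j == m then 2 else 1) * 'C(n, j))%:R : k | j <- odd_upto] =
  if ~~ odd m then [seq 'C(n, j)%:R | j <- odd_below]
  else (2 * 'C(n, m))%:R :: [seq 'C(n, j)%:R | j <- odd_below].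
Proof.
rewrite map_cat.
have -> : [seq ((if j == m then 2 else 1) * 'C(n, j))%:R : k | j <- odd_below] =
          [seq 'C(n, j)%:R | j <- odd_below].
  by apply/eq_in_map => j /mem_odd_below/ltn_eqF ->; rewrite mul1n.
by case: (odd m); rewrite /= ?eqxx.
Qed.

End EvenOddForms.

Theorem theoremB (k : fieldType) (n : nat) :
  2 \notin [pchar k] -> (0 < n)%N -> ~~ odd n ->
  form_iso (diag_form (phi_even k n))
    (diag_form (if (n %% 4 == 0)%N then phi_odd k n
                else ((2 * 'C(n, n./2))%:R :: phi_odd k n))).
Proof.
move=> char_k_neq2 _ even_n.
have two_neq0 : (2 : k) != 0 by move: char_k_neq2; rewrite inE.
have [m ->] : exists m, n = m.*2 by exists n./2; rewrite even_halfK.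
rewrite /phi_even /phi_odd !filter_iota_double double_mod4 doubleK.
by rewrite -odd_upto_weights; apply: even_below_odd_upto_iso.
Qed.
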